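(* Let $n\in\mathbb{N}$ and $0<\beta\le n$. Then there exists a constant $C_\beta>0$ depending only on $\beta$ such that for all functions $f,g$ on $\mathbb{R}^n$: (i) $\|f+g\|_{\operatorname{BMO}^\beta(\mathbb{R}^n)}\le2(\|f\|_{\operatorname{BMO}^\beta(\mathbb{R}^n)}+\|g\|_{\operatorname{BMO}^\beta(\mathbb{R}^n)})$; (ii) $\|\lambda f\|_{\operatorname{BMO}^\beta(\mathbb{R}^n)}=|\lambda|\|f\|_{\operatorname{BMO}^\beta(\mathbb{R}^n)}$ for every $\lambda\in\mathbb{R}$; (iii) $\||f|\|_{\operatorname{BMO}^\beta(\mathbb{R}^n)}\le C_\beta\|f\|_{\operatorname{BMO}^\beta(\mathbb{R}^n)}$; (iv) $\|\max(f,g)\|_{\operatorname{BMO}^\beta(\mathbb{R}^n)}\le C_\beta(\|f\|_{\operatorname{BMO}^\beta(\mathbb{R}^n)}+\|g\|_{\operatorname{BMO}^\beta(\mathbb{R}^n)})$; (v) $\|\min(f,g)\|_{\operatorname{BMO}^\beta(\mathbb{R}^n)}\le C_\beta(\|f\|_{\operatorname{BMO}^\beta(\mathbb{R}^n)}+\|g\|_{\operatorname{BMO}^\beta(\mathbb{R}^n)})$.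
   Context: $\mathcal{H}^\beta_\infty(E)=\inf\{\sum_i\omega_\beta r_i^\beta:E\subset\bigcup_iB(x_i,r_i)\}$, $\omega_\beta=\pi^{\beta/2}/\Gamma(\beta/2+1)$; integrals against $\mathcal{H}^\beta_\infty$ are Choquet integrals $\int_\Omega h\,d\mathcal{H}^\beta_\infty=\int_0^\infty\mathcal{H}^\beta_\infty(\{x\in\Omega:h>t\})\,dt$. Cubes are axis-parallel with side length $\ell(Q)$. $\|f\|_{\operatorname{BMO}^\beta(\mathbb{R}^n)}=\sup_Q\inf_{c\in\mathbb{R}}\ell(Q)^{-\beta}\int_Q|f-c|\,d\mathcal{H}^\beta_\infty$. *)

From HB Require Import structures.
From mathcomp Require Import all_boot all_order all_algebra.
From mathcomp Require Import all_classical all_reals all_analysis.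
Set Implicit Arguments. Unset Strict Implicit. Unset Printing Implicit Defensive.
Import Order.TTheory GRing.Theory Num.Theory.
Local Open Scope classical_set_scope.
Local Open Scope ring_scope.

Section BMOdefs.
Variable R : realType.

Definition Gammaf (s : R) : R :=
  fine (\int[@lebesgue_measure R]_(t in `]0%R, +oo[%classic)
          (powR t (s - 1) * expR (- t))%:E)%E.

Definition omega (beta : R) : R :=
  powR pi (beta / 2) / Gammaf (beta / 2 + 1).

Definition edist (n : nat) (x y : 'rV[R]_n) : R :=
  Num.sqrt (\sum_(i < n) (x ord0 i - y ord0 i) ^+ 2).

Definition eball (n : nat) (x : 'rV[R]_n) (r : R) : set 'rV[R]_n :=
  [set y | edist x y <= r].

Definition hcontent (n : nat) (beta : R) (E : set 'rV[R]_n) : \bar R :=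
  ereal_inf [set (\sum_(0 <= i <oo) (omega beta * powR (r i) beta)%:E)%E
            | r in [set r : nat -> R | (forall i, 0 <= r i) /\
                exists x : nat -> 'rV[R]_n,
                  E `<=` \bigcup_i eball (x i) (r i)]].

Definition choquet (n : nat) (beta : R) (Omega : set 'rV[R]_n)
    (h : 'rV[R]_n -> R) : \bar R :=
  (\int[@lebesgue_measure R]_(t in `[0%R, +oo[%classic)
     hcontent beta [set x | Omega x /\ (t < h x)%R])%E.

Definition cube (n : nat) (a : 'rV[R]_n) (l : R) : set 'rV[R]_n :=
  [set x | forall i : 'I_n, a ord0 i <= x ord0 i <= a ord0 i + l].

Definition bmo_norm (n : nat) (beta : R) (f : 'rV[R]_n -> R) : \bar R :=
  ereal_sup [set ereal_inf [set ((powR al.2 (- beta))%:E *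
                    choquet beta (cube al.1 al.2) (fun x => `|f x - c|%R))%E
                            | c in [set: R]]
            | al in [set al : 'rV[R]_n * R | 0 < al.2]].
End BMOdefs.

(* Everything rests on three properties of the Hausdorff content: it is
   monotone, subadditive (interleave two covers by balls) and vanishes on the
   empty set.  Hence the Choquet integral is monotone, positively homogeneous
   (dilate the level variable) and satisfies int h <= 2 (int h1 + int h2)
   whenever h <= h1 + h2, because {h > t} lies in {2 h1 > t} u {2 h2 > t}.
   If |F a b - F c d| <= |a - c| + |b - d|, then choosing the constant
   F c1 c2 in the infimum over c gives
   ||F(f, g)||_BMO <= 2 (||f||_BMO + ||g||_BMO); sum, max and min are such F.
   Similarly ||F o f||_BMO <= k ||f||_BMO for k-Lipschitz F, which gives the
   bound for |f| and, applied to lam x and lam^-1 x, the homogeneity.  So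
   C_beta = 2 works. *)

From HB Require Import structures.
From mathcomp Require Import all_boot all_order all_algebra.
From mathcomp Require Import all_classical all_reals all_analysis.
From mathcomp Require Import measurable_realfun lra.
Import Order.TTheory GRing.Theory Num.Theory.
Local Open Scope classical_set_scope.
Local Open Scope ring_scope.

Definition interleave {T : Type} (a b : nat -> T) (k : nat) : T :=
  if odd k then b k./2 else a k./2.

Section extended_reals.
Context {R : realType}.
Local Open Scope ereal_scope.

Lemma le_ereal_infD (S T : set (\bar R)) (x : \bar R) :
  (forall a, S a -> 0 <= a) -> (forall b, T b -> 0 <= b) ->
  (forall a b, S a -> T b -> x <= a + b) -> x <= ereal_inf S + ereal_inf T.
Proof.
move=> S0 T0 xST.
have iS0 : 0 <= ereal_inf S by apply: le_ereal_inf_tmp.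
have iT0 : 0 <= ereal_inf T by apply: le_ereal_inf_tmp.
have [->|Sy] := eqVneq (ereal_inf S) +oo.
  by rewrite addye ?leey // gt_eqF // (lt_le_trans _ iT0) // ltNy0.
have [->|Ty] := eqVneq (ereal_inf T) +oo.
  by rewrite addey ?leey // gt_eqF // (lt_le_trans _ iS0) // ltNy0.
have Sf : ereal_inf S \is a fin_num by rewrite ge0_fin_numE // ltey.
have Tf : ereal_inf T \is a fin_num by rewrite ge0_fin_numE // ltey.
apply/lee_addgt0Pr => e e0.
have e20 : (0 < e / 2)%R by rewrite divr_gt0.
have [a Sa ha] := lb_ereal_inf_adherent e20 Sf.
have [b Tb hb] := lb_ereal_inf_adherent e20 Tf.
apply: (le_trans (xST _ _ Sa Tb)).
rewrite [e in e%:E]splitr EFinD addeACA.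
by apply: leeD; apply: ltW.
Qed.

Lemma sum_interleave (a b : nat -> \bar R) (N : nat) :
  \sum_(0 <= k < N.*2) interleave a b k =
  \sum_(0 <= i < N) a i + \sum_(0 <= i < N) b i.
Proof.
elim: N => [|N IH]; first by rewrite !big_geq // adde0.
rewrite doubleS !big_nat_recr //= IH /interleave odd_double /= uphalf_double.
by rewrite odd_double /= doubleK [RHS]addrACA addrA.
Qed.

Lemma nneseries_interleave_le (a b : nat -> \bar R) :
  (forall i, 0 <= a i) -> (forall i, 0 <= b i) ->
  \sum_(0 <= k <oo) interleave a b k <=
  \sum_(0 <= i <oo) a i + \sum_(0 <= i <oo) b i.
Proof.
move=> a0 b0; have ab0 k : 0 <= interleave a b k by rewrite /interleave; case: ifP.
apply: lime_le; first exact: is_cvg_nneseries.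
apply: nearW => m; apply: (@le_trans _ _ (\sum_(0 <= k < m.*2) interleave a b k)).
  by rewrite -addnn; apply: lee_sum_nneg_natr => //; exact: leq_addr.
by rewrite sum_interleave; apply: leeD; exact: nneseries_lim_ge.
Qed.

End extended_reals.

Section lipschitz_operations.
Context {R : realDomainType}.
Implicit Types a b c d : R.

Lemma ler_dist_add2 a b c d : `|(a + b) - (c + d)| <= `|a - c| + `|b - d|.
Proof. by rewrite opprD addrACA ler_normD. Qed.

Lemma ler_dist_max2 a b c d :
  `|Num.max a b - Num.max c d| <= `|a - c| + `|b - d|.
Proof.
move: (ler_norm (a - c)) (ler_norm (c - a)) (ler_norm (b - d)) (ler_norm (d - b)).
rewrite !(distrC c a) !(distrC d b) !maxEle ler_norml.
by case: (leP a b); case: (leP c d) => *; apply/andP; split; lra.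
Qed.

Lemma ler_dist_min2 a b c d :
  `|Num.min a b - Num.min c d| <= `|a - c| + `|b - d|.
Proof.
move: (ler_norm (a - c)) (ler_norm (c - a)) (ler_norm (b - d)) (ler_norm (d - b)).
rewrite !(distrC c a) !(distrC d b) !minEle ler_norml.
by case: (leP a b); case: (leP c d) => *; apply/andP; split; lra.
Qed.

End lipschitz_operations.

Lemma preimage_mulr_itvoc {R : realFieldType} (a x y : R) : 0 < a ->
  (fun t => a * t) @^-1` `]x, y]%classic = `](x / a), (y / a)]%classic.
Proof.
move=> a0; apply/seteqP; split => t; rewrite /= !in_itv /=.
  by move=> /andP[xt ty]; rewrite ltr_pdivrMr // ler_pdivlMr // ![t * a]mulrC xt ty.
by move=> /andP[xt ty]; rewrite mulrC -ltr_pdivrMr // -ler_pdivlMr // xt ty.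
Qed.

Section lebesgue_dilation.
Context {R : realType}.
Local Open Scope ereal_scope.
Notation mu := (@lebesgue_measure R).
Variable a : R.
Hypothesis a_gt0 : (0 < a)%R.

Let scale : measurableTypeR R -> measurableTypeR R := fun t => (a * t)%R.

Let measurable_scale : measurable_fun [set: measurableTypeR R] scale.
Proof. by apply: measurable_funM => //; exact: measurable_cst. Qed.

Let dilated_lebesgue := measure_function_mscale__canonical__measure_function_Measure
  (NngNum (ltW a_gt0))
  (measure_function_pushforward__canonical__measure_function_Measure mu measurable_scale).

Lemma lebesgue_measure_dilation (A : set R) : measurable A ->
  mu A = a%:E * mu (scale @^-1` A).
Proof.
move=> mA; apply: (@lebesgue_measure_unique R dilated_lebesgue _ _ mA) => _ [[x y] _ <-].
transitivity (a%:E * mu (scale @^-1` `]x, y]%classic)); last by [].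
rewrite preimage_mulr_itvoc //.
rewrite !lebesgue_measure_itv /= !lte_fin ltr_pM2r ?invr_gt0 //.
case: ifP => _; last by rewrite mule0.
by rewrite -EFinD -EFinM -mulrBl mulrCA divff ?gt_eqF // mulr1.
Qed.

Lemma ge0_integral_dilation (F : R -> \bar R) :
  measurable_fun (`[0%R, +oo[%classic : set R) F -> (forall t, (0 <= t)%R -> 0 <= F t) ->
  \int[mu]_(t in `[0%R, +oo[) F t = a%:E * \int[mu]_(t in `[0%R, +oo[) F (a * t)%R.
Proof.
move=> mF F0.
have F0' t : `[0%R, +oo[%classic t -> 0 <= F t.
  by rewrite /= in_itv /= andbT; exact: F0.
rewrite (@eq_measure_integral _ _ _ _ dilated_lebesgue); last first.
  by move=> A mA _; exact: lebesgue_measure_dilation.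
rewrite ge0_integral_mscale // (ge0_integral_pushforward measurable_scale) //.
- suff -> : scale @^-1` `[0%R, +oo[ = `[0%R, +oo[%classic by [].
  by apply/seteqP; split => t; rewrite /= !in_itv /= !andbT ?pmulr_rge0.
- by move=> t /[!inE]; exact: F0'.
Qed.

End lebesgue_dilation.

Lemma nonincreasing_emeasurable {R : realType} (D : set R) (f : R -> \bar R) :
  measurable D -> (forall x y : R, (x <= y)%R -> (f y <= f x)%E) ->
  measurable_fun D f.
Proof.
move=> mD f_ni.
apply: (@measurability _ _ _ _ D f (@ErealGenCInfty.G R)) => [|/= _ [_] [r] -> <-].
  exact: ErealGenCInfty.measurableE.
apply: measurableI => //; apply: is_interval_measurable => s t /=.
rewrite !in_itv /= !andbT => fs ft u /andP[su ut].
by rewrite in_itv /= andbT (le_trans ft) // f_ni.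
Qed.

Lemma omega_ge0 {R : realType} (beta : R) : (0 <= omega beta)%R.
Proof.
rewrite /omega; apply: divr_ge0; first exact: powR_ge0.
apply: fine_ge0; apply: integral_ge0 => t _.
by rewrite lee_fin mulr_ge0 ?powR_ge0 ?expR_ge0.
Qed.

Section hausdorff_content.
Context {R : realType} {n : nat} {beta : R}.
Local Open Scope ereal_scope.
Notation H := (@hcontent R n beta).

Lemma ball_cost_ge0 (r : R) : 0 <= (omega beta * powR r beta)%:E.
Proof. by rewrite lee_fin mulr_ge0 ?omega_ge0 ?powR_ge0. Qed.

Lemma hcontent_ge0 (A : set 'rV[R]_n) : 0 <= H A.
Proof.
apply: le_ereal_inf_tmp => _ [r _ <-].
by apply: nneseries_ge0 => i _ _; exact: ball_cost_ge0.
Qed.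

Lemma le_hcontent (A B : set 'rV[R]_n) : A `<=` B -> H A <= H B.
Proof.
move=> AB; apply: ereal_inf_le_tmp => _ [r [r0 [x Bx]] <-].
by exists r => //; split => //; exists x; exact: subset_trans AB Bx.
Qed.

Lemma hcontentU (A B : set 'rV[R]_n) : H (A `|` B) <= H A + H B.
Proof.
apply: le_ereal_infD.
- by move=> _ [r _ <-]; apply: nneseries_ge0 => i _ _; exact: ball_cost_ge0.
- by move=> _ [r _ <-]; apply: nneseries_ge0 => i _ _; exact: ball_cost_ge0.
move=> _ _ [r1 [r10 [x1 Ax1]] <-] [r2 [r20 [x2 Bx2]] <-].
apply: (le_trans _ (nneseries_interleave_le _ _ (fun i => ball_cost_ge0 (r1 i))
                                              (fun i => ball_cost_ge0 (r2 i)))).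
apply: ereal_inf_lbound; exists (interleave r1 r2).
  split; first by move=> k; rewrite /interleave; case: ifP.
  exists (interleave x1 x2) => y [/Ax1|/Bx2] [i _ yi].
    by exists i.*2 => //; rewrite /interleave odd_double doubleK.
  by exists i.*2.+1 => //; rewrite /interleave /= odd_double /= uphalf_double.
by congr (limn _); apply/funext => m; apply: eq_bigr => k _; rewrite /interleave; case: ifP.
Qed.

(* Radius-0 balls are free only for [beta != 0], since [powR 0 0 = 1]. *)
Lemma hcontent0 : beta != 0%R -> H set0 = 0.
Proof.
move=> beta_neq0; apply/le_anti; rewrite hcontent_ge0 andbT.
apply: ereal_inf_lbound; exists (fun _ => 0%R).
  by split => //; exists (fun _ => 0%R); exact: sub0set.
by apply: eseries0 => i _ _; rewrite powR0 // mulr0.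
Qed.

End hausdorff_content.

Section choquet_integral.
Context {R : realType} {n : nat} {beta : R}.
Local Open Scope ereal_scope.
Notation H := (@hcontent R n beta).
Notation mu := (@lebesgue_measure R).
Implicit Types (O : set 'rV[R]_n) (h : 'rV[R]_n -> R).

Definition level_content O h (t : R) := H [set x | O x /\ (t < h x)%R].

Lemma level_content_ge0 O h t : 0 <= level_content O h t.
Proof. exact: hcontent_ge0. Qed.

Lemma level_content_noninc O h (s t : R) :
  (s <= t)%R -> level_content O h t <= level_content O h s.
Proof.
by move=> st; apply: le_hcontent => x [Ox tx]; split => //; exact: le_lt_trans tx.
Qed.

Lemma measurable_level_content O h :
  measurable_fun (`[0%R, +oo[%classic : set R) (level_content O h).
Proof. by apply: nonincreasing_emeasurable => // s t; exact: level_content_noninc. Qed.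

Lemma choquetE O h : choquet beta O h = \int[mu]_(t in `[0%R, +oo[) level_content O h t.
Proof. by []. Qed.

Lemma choquet_ge0 O h : 0 <= choquet beta O h.
Proof. by apply: integral_ge0 => t _; exact: level_content_ge0. Qed.

Lemma le_choquet O h1 h2 : (forall x, O x -> (h1 x <= h2 x)%R) ->
  choquet beta O h1 <= choquet beta O h2.
Proof.
move=> h12; rewrite !choquetE; apply: ge0_le_integral => //.
- by move=> t _; exact: level_content_ge0.
- exact: measurable_level_content.
- exact: measurable_level_content.
move=> t _; apply: le_hcontent => x [Ox tx].
by split => //; exact: lt_le_trans (h12 _ Ox).
Qed.

Lemma choquetZ O h (k : R) : (0 < k)%R ->
  choquet beta O (fun x => k * h x)%R = k%:E * choquet beta O h.
Proof.
move=> k0; rewrite !choquetE (ge0_integral_dilation k k0); last 2 first.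
- exact: measurable_level_content.
- by move=> t _; exact: level_content_ge0.
congr (_ * _); apply: eq_integral => t _; congr H.
by apply/seteqP; split => x [Ox tx]; split => //; move: tx; rewrite ltr_pM2l.
Qed.

Lemma choquet_quasi_subadditive O h h1 h2 :
  (forall x, O x -> (h x <= h1 x + h2 x)%R) ->
  choquet beta O h <= 2%:E * (choquet beta O h1 + choquet beta O h2).
Proof.
move=> hh; rewrite ge0_muleDr ?choquet_ge0 // -!choquetZ // !choquetE.
rewrite -ge0_integralD //; last 4 first.
- by move=> t _; exact: level_content_ge0.
- exact: measurable_level_content.
- by move=> t _; exact: level_content_ge0.
- exact: measurable_level_content.
apply: ge0_le_integral => //.
- by move=> t _; exact: level_content_ge0.
- exact: measurable_level_content.
- by apply: emeasurable_funD; exact: measurable_level_content.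
move=> t _; apply: le_trans (hcontentU _ _); apply: le_hcontent.
move=> x [Ox tx] /=; have := hh _ Ox.
by have [|] := ltP t (2 * h1 x)%R; [left | have [|] := ltP t (2 * h2 x)%R; [right | lra]].
Qed.

Lemma choquet0 O : beta != 0%R -> choquet beta O (fun=> 0%R) = 0.
Proof.
move=> beta_neq0; apply: integral0_eq => t; rewrite /= in_itv /= andbT => t0.
rewrite -(@hcontent0 _ n _ beta_neq0); congr H.
by apply/seteqP; split => x //= [_]; rewrite ltNge t0.
Qed.

End choquet_integral.

Section bmo.
Context {R : realType} {n : nat} {beta : R}.
Local Open Scope ereal_scope.
Implicit Types (f g : 'rV[R]_n -> R) (al : 'rV[R]_n * R).

Definition mean_osc f al (c : R) : \bar R :=
  (powR al.2 (- beta))%:E * choquet beta (cube al.1 al.2) (fun x => `|f x - c|%R).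

Definition cube_osc f al : \bar R := ereal_inf [set mean_osc f al c | c in [set: R]].

Lemma bmo_normE f :
  bmo_norm beta f = ereal_sup [set cube_osc f al | al in [set al | (0 < al.2)%R]].
Proof. by []. Qed.

Lemma mean_osc_ge0 f al c : 0 <= mean_osc f al c.
Proof. by rewrite mule_ge0 ?lee_fin ?powR_ge0 ?choquet_ge0. Qed.

Lemma cube_osc_ge0 f al : 0 <= cube_osc f al.
Proof. by apply: le_ereal_inf_tmp => _ [c _ <-]; exact: mean_osc_ge0. Qed.

Lemma bmo_norm_ge0 f : 0 <= bmo_norm beta f.
Proof.
rewrite bmo_normE; apply: le_trans (cube_osc_ge0 f (0%R, 1%R)) _.
by apply: ereal_sup_ubound; exists (0%R, 1%R) => /=.
Qed.

Lemma cube_osc_lipschitz (F : R -> R) (k : R) f al : (0 < k)%R ->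
  (forall a b, `|F a - F b| <= k * `|a - b|)%R ->
  cube_osc (fun x => F (f x)) al <= k%:E * cube_osc f al.
Proof.
move=> k0 FL; rewrite -ereal_inf_pZl //.
apply: le_ereal_inf_tmp => _ [_ [c _ <-] <-].
apply: (@le_trans _ _ (mean_osc (fun x => F (f x)) al (F c))).
  by apply: ereal_inf_lbound; exists (F c).
rewrite /mean_osc muleCA -(choquetZ _ _ _ k0).
apply: lee_wpmul2l; first by rewrite lee_fin powR_ge0.
by apply: le_choquet => x _; exact: FL.
Qed.

Lemma bmo_norm_lipschitz (F : R -> R) (k : R) f : (0 < k)%R ->
  (forall a b, `|F a - F b| <= k * `|a - b|)%R ->
  bmo_norm beta (fun x => F (f x)) <= k%:E * bmo_norm beta f.
Proof.
move=> k0 FL; rewrite !bmo_normE -ereal_sup_pZl //.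
apply: ge_ereal_sup => _ [al al0 <-]; apply: le_trans (cube_osc_lipschitz _ _ _ al k0 FL) _.
by apply: ereal_sup_ubound; exists (cube_osc f al) => //; exists al.
Qed.

Lemma cube_osc_lipschitz2 (F : R -> R -> R) f g al :
  (forall a b c d, `|F a b - F c d| <= `|a - c| + `|b - d|)%R ->
  cube_osc (fun x => F (f x) (g x)) al <= 2%:E * (cube_osc f al + cube_osc g al).
Proof.
move=> FL; rewrite ge0_muleDr ?cube_osc_ge0 // -!ereal_inf_pZl //.
apply: le_ereal_infD; [by move=> _ [_ [c _ <-] <-]; rewrite mule_ge0 ?mean_osc_ge0..|].
move=> _ _ [_ [c1 _ <-] <-] [_ [c2 _ <-] <-].
apply: (@le_trans _ _ (mean_osc (fun x => F (f x) (g x)) al (F c1 c2))).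
  by apply: ereal_inf_lbound; exists (F c1 c2).
rewrite /mean_osc !(muleCA 2%:E) -ge0_muleDr ?mule_ge0 ?choquet_ge0 //.
rewrite -ge0_muleDr ?choquet_ge0 //; apply: lee_wpmul2l; first by rewrite lee_fin powR_ge0.
by apply: choquet_quasi_subadditive => x _; exact: FL.
Qed.

Lemma bmo_norm_lipschitz2 (F : R -> R -> R) f g :
  (forall a b c d, `|F a b - F c d| <= `|a - c| + `|b - d|)%R ->
  bmo_norm beta (fun x => F (f x) (g x)) <= 2%:E * (bmo_norm beta f + bmo_norm beta g).
Proof.
move=> FL; rewrite [X in X <= _]bmo_normE; apply: ge_ereal_sup => _ [al al0 <-].
apply: le_trans (cube_osc_lipschitz2 _ _ _ al FL) _.
by apply: lee_wpmul2l => //; apply: leeD; apply: ereal_sup_ubound; exists al.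
Qed.

Hypothesis beta_neq0 : beta != 0%R.

Lemma bmo_norm_cst (a : R) : bmo_norm beta (fun _ : 'rV[R]_n => a) = 0.
Proof.
apply/le_anti; rewrite bmo_norm_ge0 andbT bmo_normE.
apply: ge_ereal_sup => _ [al _ <-]; apply: ereal_inf_lbound; exists a => //.
rewrite /mean_osc; have -> : (fun _ : 'rV[R]_n => `|a - a|%R) = fun=> 0%R.
  by apply/funext => x; rewrite subrr normr0.
by rewrite choquet0 // mule0.
Qed.

Lemma bmo_normZ (lam : R) f :
  bmo_norm beta (fun x => lam * f x)%R = `|lam|%:E * bmo_norm beta f.
Proof.
have [->|lam_neq0] := eqVneq lam 0%R.
  rewrite normr0 mul0e -(bmo_norm_cst 0); congr bmo_norm.
  by apply/funext => x; rewrite mul0r.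
have lamL (mu : R) a b : (`|mu * a - mu * b| <= `|mu| * `|a - b|)%R.
  by rewrite -mulrBr normrM.
apply/le_anti/andP; split; first by apply: bmo_norm_lipschitz; rewrite ?normr_gt0.
rewrite -lee_pdivlMl ?normr_gt0 // -normrV ?unitfE //.
have -> : bmo_norm beta f = bmo_norm beta (fun x => lam^-1 * (lam * f x))%R.
  by congr bmo_norm; apply/funext => x; rewrite mulKf.
by apply: bmo_norm_lipschitz; rewrite ?normr_gt0 ?invr_eq0.
Qed.

End bmo.

Theorem lemma2p10 (R : realType) (beta : R) (hbeta : 0 < beta) :
  exists C : R, 0 < C /\
  forall (n : nat), beta <= n%:R ->
  forall f g : 'rV[R]_n -> R,
    [/\ (bmo_norm beta (fun x => (f x + g x)%R)
           <= 2%:E * (bmo_norm beta f + bmo_norm beta g))%E,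
        (forall lam : R,
           bmo_norm beta (fun x => (lam * f x)%R) = (`|lam|%:E * bmo_norm beta f)%E),
        (bmo_norm beta (fun x => `|f x|%R) <= C%:E * bmo_norm beta f)%E,
        (bmo_norm beta (fun x => Num.max (f x) (g x))
           <= C%:E * (bmo_norm beta f + bmo_norm beta g))%E &
        (bmo_norm beta (fun x => Num.min (f x) (g x))
           <= C%:E * (bmo_norm beta f + bmo_norm beta g))%E].
Proof.
have beta_neq0 : beta != 0 by rewrite gt_eqF.
exists 2; split => // n _ f g; split.
- exact: (bmo_norm_lipschitz2 +%R f g ler_dist_add2).
- by move=> lam; exact: bmo_normZ.
- have normL (a b : R) : `| `|a| - `|b| | <= 1 * `|a - b| by rewrite mul1r ler_dist_dist.
  apply: le_trans (bmo_norm_lipschitz _ _ f ltr01 normL) _.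
  by rewrite mul1e lee_pemull ?bmo_norm_ge0 ?lee_fin ?ler1n.
- exact: (bmo_norm_lipschitz2 Num.max f g ler_dist_max2).
- exact: (bmo_norm_lipschitz2 Num.min f g ler_dist_min2).
Qed.
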